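(* Assume the Setting (S). For every $N\ge1$, $h_N>0$ everywhere and $$\partial\bar\partial\log h_N=h_{N-1}-2h_N+h_{N+1}$$ (the Ricci form of the Kähler form $h_N\,dx\wedge dy$ equals the second difference of the Kähler forms $h_{N-1},h_N,h_{N+1}$).
   Context: Setting (S). Let $\mathcal H$ be a separable complex Hilbert space with inner product $\langle\cdot|\cdot\rangle$, antilinear in the first slot. Let $\Lambda\subset\mathbb C$ be a lattice with fundamental domain $D$. Write $z=x+iy$, $\partial=\tfrac12(\partial_x-i\partial_y)$, $\bar\partial=\tfrac12(\partial_x+i\partial_y)$. Let $f:\mathbb C\to\mathcal H$ be holomorphic and satisfy: (i) for every $z\in\mathbb C$ and every $n\ge0$ the vectors $f(z),\partial f(z),\dots,\partial^n f(z)$ are linearly independent; (ii) for every $\lambda\in\Lambda$ there are a nowhere-vanishing holomorphic function $c_\lambda:\mathbb C\to\mathbb C$ and a unitary operator $V_\lambda$ on $\mathcal H$ independent of $z$ such that $f(z+\lambda)=c_\lambda(z)V_\lambda f(z)$ for all $z$. For $n\ge0$ let $P_n(z)$ be the orthogonal projector onto $\mathrm{span}\{f(z),\partial f(z),\dots,\partial^{n-1}f(z)\}$ (with $P_0=0$), let $r_n=\|(1-P_n)\partial^n f\|>0$ and define the ''generalized Landau levels'' $u_n=(1-P_n)\partial^n f/r_n$. Define $h_N=|\langle u_N|\partial u_{N-1}\rangle|^2$ for $N\ge1$ and $h_0=0$. *)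

From Stdlib Require Import Reals ClassicalEpsilon.
From Coquelicot Require Import Coquelicot.
Open Scope R_scope.

Definition choose_or {V : Type} (P : V -> Prop) (d : V) : V :=
  match excluded_middle_informative (exists v, P v) with
  | left h => proj1_sig (constructive_indefinite_description P h)
  | right _ => d
  end.

Section Hilb.
Context {H : NormedModule C_AbsRing}.

(* complex Hilbert space structure: inner product antilinear in the first
   slot, linear in the second, Hermitian, inducing the norm; completeness is
   required through the type (CompleteNormedModule) in the theorem. *)
Definition is_inner_product (ip : H -> H -> C) : Prop :=
  (forall x y z, ip x (plus y z) = (ip x y + ip x z)%C) /\
  (forall (a : C) x y, ip x (scal a y) = (a * ip x y)%C) /\
  (forall x y, ip y x = Cconj (ip x y)) /\
  (forall x, norm x = sqrt (Re (ip x x))).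

Definition separable : Prop :=
  exists e : nat -> H, forall x (eps : R), 0 < eps ->
    exists n, norm (minus x (e n)) < eps.

(* complex derivative (total operator, 0 if it does not exist) *)
Definition cderiv (g : C -> H) (z : C) : H :=
  choose_or (fun l => @is_derive C_AbsRing H g z l) zero.

Definition holomorphic (g : C -> H) : Prop :=
  forall z, @ex_derive C_AbsRing H g z.

Fixpoint dn (g : C -> H) (n : nat) : C -> H :=
  match n with
  | O => g
  | S m => cderiv (dn g m)
  end.

(* real partial derivatives of g : C -> H in direction d (d = 1 : x, d = i : y) *)
Definition is_dir_deriv (g : C -> H) (z d : C) (v : H) : Prop :=
  filterlim (fun t : R => scal (RtoC (/ t)) (minus (g (z + RtoC t * d)%C) (g z)))
            (locally' 0) (locally v).

Definition is_wirt (g : C -> H) (z : C) (v : H) : Prop :=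
  exists vx vy, is_dir_deriv g z 1%C vx /\ is_dir_deriv g z Ci vy /\
    v = scal (RtoC (1/2)) (minus vx (scal Ci vy)).

Definition is_wirt_bar (g : C -> H) (z : C) (v : H) : Prop :=
  exists vx vy, is_dir_deriv g z 1%C vx /\ is_dir_deriv g z Ci vy /\
    v = scal (RtoC (1/2)) (plus vx (scal Ci vy)).

Definition wirt (g : C -> H) (z : C) : H := choose_or (is_wirt g z) zero.

Fixpoint lsum (g : nat -> H) (n : nat) : H :=
  match n with
  | O => zero
  | S m => plus (lsum g m) (g m)
  end.

Definition in_span (vs : nat -> H) (n : nat) (w : H) : Prop :=
  exists a : nat -> C, w = lsum (fun k => scal (a k) (vs k)) n.

Definition lin_indep (vs : nat -> H) (n : nat) : Prop :=
  forall a : nat -> C, lsum (fun k => scal (a k) (vs k)) n = zero ->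
    forall k, (k < n)%nat -> a k = 0%C.

Variable ip : H -> H -> C.

Definition orth_proj (vs : nat -> H) (n : nat) (v : H) : H :=
  choose_or (fun w => in_span vs n w /\
                      forall k, (k < n)%nat -> ip (vs k) (minus v w) = 0%C) zero.

Definition qn (f : C -> H) (n : nat) (z : C) : H :=
  minus (dn f n z) (orth_proj (fun k => dn f k z) n (dn f n z)).

Definition rn (f : C -> H) (n : nat) (z : C) : R := norm (qn f n z).

Definition un (f : C -> H) (n : nat) (z : C) : H :=
  scal (RtoC (/ rn f n z)) (qn f n z).

Definition hN (f : C -> H) (N : nat) (z : C) : R :=
  match N with
  | O => 0
  | S M => (Cmod (ip (un f (S M) z) (wirt (un f M) z))) ^ 2
  end.

Definition is_unitary (V : H -> H) : Prop :=
  (forall x y, V (plus x y) = plus (V x) (V y)) /\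
  (forall (a : C) x, V (scal a x) = scal a (V x)) /\
  (forall x y, ip (V x) (V y) = ip x y) /\
  (forall y, exists x, V x = y).

End Hilb.

Definition holomorphicC (c : C -> C) : Prop :=
  forall z, @ex_derive C_AbsRing C_NormedModule c z.

(* lattice generated by w1, w2 (R-linearly independent) *)
Definition lattice_basis (w1 w2 : C) : Prop :=
  Im (Cconj w1 * w2)%C <> 0.

Definition lattice_pt (w1 w2 : C) (m n : Z) : C :=
  (RtoC (IZR m) * w1 + RtoC (IZR n) * w2)%C.

(** The orthogonalised derivatives [q_n = (1 - P_n) ∂ⁿf] satisfy the structure
    equations [∂ q_n = q_(n+1) + λ_n q_n] and [∂̄ q_n ∈ span(q_0, …, q_(n-1))], where
    [λ_n = θ_n - θ_(n-1)] and [θ_n = ⟨q_n, ∂ⁿ⁺¹f⟩ / |q_n|²]; both come from differentiating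
    the Gram–Schmidt recursion, using that every [∂ᵏf] is holomorphic. With
    [s_n = |q_n|²] one gets [h_(n+1) = s_(n+1) / s_n], [∂ log s_n = λ_n] and
    [∂̄ θ_n = h_(n+1)]. Since [log h_N = log s_N - log s_(N-1)] is real, [∂̄ log h_N] is the
    conjugate of [λ_N - λ_(N-1)], and applying [∂] yields [h_(N+1) - 2 h_N + h_(N-1)]. *)

From Stdlib Require Import Reals Lra Lia FunctionalExtensionality ClassicalEpsilon Arith.
From Coquelicot Require Import Coquelicot.
Open Scope R_scope.

Lemma choose_or_spec {V} (P : V -> Prop) d : (exists v, P v) -> P (choose_or P d).
Proof.
  intros h. unfold choose_or. destruct excluded_middle_informative as [h'|h'].
  - apply proj2_sig.
  - contradiction.
Qed.

Lemma choose_or_unique {V} (P : V -> Prop) d v :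
  P v -> (forall v', P v' -> v' = v) -> choose_or P d = v.
Proof. intros hv hu. apply hu, choose_or_spec. eauto. Qed.

Ltac C_components := apply injective_projections; simpl; try ring.

Lemma Cconj_RtoC (x : R) : Cconj (RtoC x) = RtoC x.
Proof. C_components. Qed.

Lemma Cconj_Ci : Cconj Ci = (- Ci)%C.
Proof. C_components. Qed.

Lemma RtoC_neq_0 (x : R) : x <> 0 -> RtoC x <> RtoC 0.
Proof. intros h E. apply (f_equal fst) in E. simpl in E. auto. Qed.

Ltac rw_by T R pf := let h := fresh in assert (h : T = R) by (exact pf); rewrite h; clear h.

Ltac C_goal := match goal with |- ?a = ?b => change (@eq C a b) end.

Ltac C_ops := repeat match goal with
 | |- context [?T] =>
   match T with
   | @scal _ _ ?a ?b => rw_by T (a * b)%C (eq_refl (a * b)%C)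
   | @minus _ ?a ?b => rw_by T (a - b)%C (eq_refl (a - b)%C)
   | @plus _ ?a ?b => rw_by T (a + b)%C (eq_refl (a + b)%C)
   | @opp _ ?a => rw_by T (- a)%C (eq_refl (- a)%C)
   | @zero _ => rw_by T (RtoC 0) (eq_refl (RtoC 0))
   end
 end; try C_goal.

(* Abstract the opaque complex subterms, then solve componentwise. *)
Ltac C_field := repeat (match goal with |- context [?T] =>
   match type of T with C => lazymatch T with
     | (_, _) => fail
     | _ => is_var T; fail
     | _ => match T with
            | Cplus _ _ => fail | Cmult _ _ => fail | Copp _ => fail | Cminus _ _ => fail
            | Cconj _ => fail | RtoC _ => fail | Ci => fail | Cinv _ => fail | Cdiv _ _ => fail
            | _ => generalize T; intro end end end end);
  repeat match goal with c : C |- _ => destruct c end;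
  apply injective_projections; simpl; field.

Lemma minus_zero_eq {G : AbelianGroup} (x y : G) : minus x y = zero -> x = y.
Proof.
  intros h. transitivity (plus (minus x y) y).
  - unfold minus. rewrite <- plus_assoc, plus_opp_l, plus_zero_r. reflexivity.
  - rewrite h. apply plus_zero_l.
Qed.

Section InnerProduct.
Context {V : NormedModule C_AbsRing} (ip : V -> V -> C) (Hip : is_inner_product ip).

Lemma ip_plus_r x y z : ip x (plus y z) = (ip x y + ip x z)%C.
Proof. apply Hip. Qed.
Lemma ip_scal_r (a : C) x y : ip x (scal a y) = (a * ip x y)%C.
Proof. apply Hip. Qed.
Lemma ip_conj x y : ip y x = Cconj (ip x y).
Proof. apply Hip. Qed.
Lemma ip_plus_l x y z : ip (plus x y) z = (ip x z + ip y z)%C.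
Proof. rewrite ip_conj, ip_plus_r, Cplus_conj, <- !ip_conj. reflexivity. Qed.
Lemma ip_scal_l (a : C) x y : ip (scal a x) y = (Cconj a * ip x y)%C.
Proof. rewrite ip_conj, ip_scal_r, Cmult_conj, <- !ip_conj. reflexivity. Qed.

Lemma ip_zero_r x : ip x zero = 0%C.
Proof.
  assert (E : (zero : V) = scal (RtoC 0) (zero : V))
    by exact (eq_sym (@scal_zero_r _ (NormedModule.ModuleSpace C_AbsRing V) _)).
  rewrite E, ip_scal_r. C_components.
Qed.
Lemma ip_zero_l x : ip zero x = 0%C.
Proof. rewrite ip_conj, ip_zero_r. C_components. Qed.
Lemma ip_opp_r x y : ip x (opp y) = (- ip x y)%C.
Proof.
  assert (E : opp y = scal (opp (one : C_AbsRing)) y)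
    by exact (eq_sym (@scal_opp_one _ (NormedModule.ModuleSpace C_AbsRing V) y)).
  rewrite E, ip_scal_r. C_components.
Qed.
Lemma ip_opp_l x y : ip (opp x) y = (- ip x y)%C.
Proof. rewrite ip_conj, ip_opp_r, Copp_conj, <- ip_conj. reflexivity. Qed.
Lemma ip_minus_r x y z : ip x (minus y z) = (ip x y - ip x z)%C.
Proof. unfold minus. rewrite ip_plus_r, ip_opp_r. reflexivity. Qed.
Lemma ip_minus_l x y z : ip (minus x y) z = (ip x z - ip y z)%C.
Proof. unfold minus. rewrite ip_plus_l, ip_opp_l. reflexivity. Qed.

Lemma ip_self x : ip x x = RtoC (norm x ^ 2).
Proof.
  assert (Him : snd (ip x x) = 0).
  { pose proof (ip_conj x x) as h. apply (f_equal snd) in h. simpl in h. lra. }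
  assert (Hn : norm x = sqrt (fst (ip x x))) by apply Hip.
  destruct (Rle_lt_dec 0 (fst (ip x x))) as [hle|hlt].
  - apply injective_projections; simpl; [|lra].
    rewrite Hn, Rmult_1_r, sqrt_sqrt; auto.
  - exfalso. rewrite sqrt_neg_0 in Hn by lra. apply norm_eq_zero in Hn. subst x.
    rewrite ip_zero_r in hlt. simpl in hlt. lra.
Qed.

Lemma ip_self_eq_0 x : ip x x = 0%C -> x = zero.
Proof.
  rewrite ip_self. intros h. apply (f_equal fst) in h. simpl in h.
  apply norm_eq_zero. nra.
Qed.

(* Vector identities are proved by pairing both sides with an arbitrary vector:
   [ip_ext] turns them into ring identities in [C]. *)
Lemma ip_ext (x y : V) : (forall e, ip e x = ip e y) -> x = y.
Proof.
  intros h. apply minus_zero_eq, ip_self_eq_0.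
  rewrite ip_minus_r, !h. C_components.
Qed.

Lemma cauchy_schwarz x y : Cmod (ip x y) <= norm x * norm y.
Proof.
  destruct (Req_dec (norm y) 0) as [h0|hne].
  { apply norm_eq_zero in h0. subst y. rewrite ip_zero_r, Cmod_0, norm_zero. lra. }
  pose proof (norm_ge_0 x) as hx. pose proof (norm_ge_0 y) as hy.
  set (b := norm y ^ 2). assert (hb : 0 < b) by (unfold b; nra).
  set (a := ip y x).
  set (w := minus x (scal (a * RtoC (/ b))%C y)).
  (* [0 <= |x - (⟨y,x⟩/|y|²) y|² = |x|² - |⟨y,x⟩|²/|y|²] *)
  assert (Ew : ip w w = (RtoC (norm x ^ 2) - RtoC (Cmod a ^ 2 / b))%C).
  { unfold w. rewrite ip_minus_l, !ip_minus_r, !ip_scal_l, !ip_scal_r, !ip_self.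
    fold b. rewrite (ip_conj y x). fold a. rewrite Cmod2_alt.
    destruct a as [a1 a2]. apply injective_projections; simpl; field; lra. }
  assert (Hw : 0 <= norm x ^ 2 - Cmod a ^ 2 / b).
  { pose proof (f_equal fst Ew) as E. rewrite ip_self in E. simpl in E. nra. }
  assert (Ha : Cmod a ^ 2 <= (norm x * norm y) ^ 2).
  { replace ((norm x * norm y) ^ 2) with (norm x ^ 2 * b) by (unfold b; ring).
    apply Rmult_le_compat_r with (r := b) in Hw; [|lra].
    field_simplify in Hw; lra. }
  replace (ip x y) with (Cconj a) by (unfold a; rewrite (ip_conj y x); reflexivity).
  rewrite Cmod_conj. pose proof (Cmod_ge_0 a).
  apply Rsqr_incr_0_var; unfold Rsqr; nra.
Qed.

Lemma filterlim_ip {T} {F : (T -> Prop) -> Prop} {FF : Filter F} (f1 f2 : T -> V) x y :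
  filterlim f1 F (locally x) -> filterlim f2 F (locally y) ->
  filterlim (fun t => ip (f1 t) (f2 t)) F (locally (ip x y)).
Proof.
  intros h1 h2.
  apply (filterlim_locally_ball_norm (U := C_NormedModule)). intros eps.
  set (M := norm x + norm y + 1).
  assert (HM : 0 < M) by (unfold M; pose proof (norm_ge_0 x); pose proof (norm_ge_0 y); lra).
  assert (hd : 0 < Rmin 1 (eps / (2 * M))).
  { apply Rmin_pos; [lra|]. apply Rdiv_lt_0_compat; [apply cond_pos| lra]. }
  set (d := mkposreal _ hd).
  apply (proj1 (filterlim_locally_ball_norm _ _)) with (eps := d) in h1.
  apply (proj1 (filterlim_locally_ball_norm _ _)) with (eps := d) in h2.
  generalize (filter_and _ _ h1 h2). apply filter_imp. intros t [ha hb].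
  unfold ball_norm in *.
  assert (hd1 : d <= 1) by (simpl; apply Rmin_l).
  assert (hd2 : d <= eps / (2 * M)) by (simpl; apply Rmin_r).
  set (a := f1 t) in *. set (b := f2 t) in *.
  assert (hbn : norm b <= norm y + 1).
  { pose proof (norm_triangle_inv b y) as hby. apply Rabs_le_between in hby. lra. }
  change (Cmod (ip a b - ip x y)%C < eps).
  replace (ip a b - ip x y)%C with (ip (minus a x) b + ip x (minus b y))%C
    by (rewrite ip_minus_l, ip_minus_r; ring).
  eapply Rle_lt_trans. apply Cmod_triangle.
  pose proof (cauchy_schwarz (minus a x) b). pose proof (cauchy_schwarz x (minus b y)).
  pose proof (norm_ge_0 x). pose proof (norm_ge_0 b). pose proof (norm_ge_0 (minus a x)).
  pose proof (norm_ge_0 (minus b y)).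
  assert (norm (minus a x) * norm b <= d * (norm y + 1)) by (apply Rmult_le_compat; lra).
  assert (norm x * norm (minus b y) <= norm x * d) by (apply Rmult_le_compat_l; lra).
  assert (d * M <= eps / 2).
  { apply Rmult_le_compat_r with (r := M) in hd2; [|lra].
    replace (eps / (2 * M) * M) with (eps / 2) in hd2 by (field; lra). lra. }
  pose proof (cond_pos eps). unfold M in *. lra.
Qed.

End InnerProduct.

Ltac ip_simpl_r ip Hip := repeat match goal with
 | |- context [ip ?e ?X] =>
   match X with
   | plus ?a ?b => rw_by (ip e X) (ip e a + ip e b)%C (ip_plus_r ip Hip e a b)
   | minus ?a ?b => rw_by (ip e X) (ip e a - ip e b)%C (ip_minus_r ip Hip e a b)
   | opp ?a => rw_by (ip e X) (- ip e a)%C (ip_opp_r ip Hip e a)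
   | scal ?k ?a => rw_by (ip e X) (k * ip e a)%C (ip_scal_r ip Hip k e a)
   | zero => rw_by (ip e X) (RtoC 0) (ip_zero_r ip Hip e)
   end
 end.

Ltac ip_simpl_l ip Hip := repeat match goal with
 | |- context [ip ?X ?y] =>
   match X with
   | plus ?a ?b => rw_by (ip X y) (ip a y + ip b y)%C (ip_plus_l ip Hip a b y)
   | minus ?a ?b => rw_by (ip X y) (ip a y - ip b y)%C (ip_minus_l ip Hip a b y)
   | opp ?a => rw_by (ip X y) (- ip a y)%C (ip_opp_l ip Hip a y)
   | scal ?k ?a => rw_by (ip X y) (Cconj k * ip a y)%C (ip_scal_l ip Hip k a y)
   | zero => rw_by (ip X y) (RtoC 0) (ip_zero_l ip Hip y)
   end
 end.

Ltac vec_eq ip Hip := apply (ip_ext ip Hip); intro e; ip_simpl_r ip Hip; try ring.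

Definition ipC (x y : C_NormedModule) : C := (Cconj x * y)%C.

Lemma ipC_inner_product : @is_inner_product C_NormedModule ipC.
Proof.
  unfold ipC. split; [|split; [|split]].
  - intros x y z. change (plus y z) with (y + z)%C. ring.
  - intros a x y. change (scal a y) with (a * y)%C. ring.
  - intros [] []. C_components.
  - intros x. change (norm x) with (Cmod x). unfold Cmod. destruct x. simpl. f_equal. ring.
Qed.

Lemma locally'_0_proper : ProperFilter (locally' (0:R)).
Proof. exact (Rbar_locally'_filter 0). Qed.

Lemma filterlim_RtoC_0 : filterlim (fun t : R => (RtoC t : C_AbsRing)) (locally' 0)
  (@locally (AbsRing_UniformSpace C_AbsRing) (RtoC 0)).
Proof.
  apply filterlim_locally. intros eps. exists eps. intros y hy _.
  change (Cmod (RtoC y - RtoC 0)%C < eps). rewrite <- RtoC_minus, Cmod_R. exact hy.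
Qed.

(* Coquelicot gives [C] two uniform structures, as a normed module and as an absolute-value
   ring; they have the same balls. *)
Lemma filterlim_C_AbsRing {T} {F : (T -> Prop) -> Prop} {FF : Filter F} (f : T -> C) (l : C) :
  filterlim f F (@locally C_NormedModule l) ->
  filterlim f F (@locally (AbsRing_UniformSpace C_AbsRing) l).
Proof.
  intros h. apply (filterlim_locally_ball_norm (U := AbsRing_NormedModule C_AbsRing)).
  intros eps. apply (proj1 (filterlim_locally_ball_norm (U := C_NormedModule) _ _) h eps).
Qed.

Definition diff_quot {V : NormedModule C_AbsRing} (g : C -> V) z d (t : R) : V :=
  scal (RtoC (/ t)) (minus (g (z + RtoC t * d)%C) (g z)).

Section DirectionalDerivative.
Context {V : NormedModule C_AbsRing} (ip : V -> V -> C) (Hip : is_inner_product ip).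
Local Ltac vext := vec_eq ip Hip.

Lemma is_dir_deriv_unique (g : C -> V) z d (v1 v2 : V) :
  is_dir_deriv g z d v1 -> is_dir_deriv g z d v2 -> v1 = v2.
Proof.
  intros h1 h2. pose proof locally'_0_proper.
  exact (filterlim_locally_unique (F := locally' (0:R)) _ _ _ h1 h2).
Qed.

Lemma is_dir_deriv_const (c : V) z d : is_dir_deriv (fun _ : C => c) z d zero.
Proof.
  unfold is_dir_deriv.
  apply filterlim_ext with (f := fun _ => zero); [intros t; vext|].
  apply filterlim_const.
Qed.

Lemma is_dir_deriv_plus (g1 g2 : C -> V) z d (v1 v2 : V) :
  is_dir_deriv g1 z d v1 -> is_dir_deriv g2 z d v2 ->
  is_dir_deriv (fun w => plus (g1 w) (g2 w)) z d (plus v1 v2).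
Proof.
  intros h1 h2. unfold is_dir_deriv.
  apply filterlim_ext with (f := fun t => plus (diff_quot g1 z d t) (diff_quot g2 z d t)).
  { intros t. unfold diff_quot. vext. }
  exact (filterlim_comp_2 _ _ _ h1 h2 (filterlim_plus _ _)).
Qed.

Lemma is_dir_deriv_opp (g : C -> V) z d (v : V) :
  is_dir_deriv g z d v -> is_dir_deriv (fun w => opp (g w)) z d (opp v).
Proof.
  intros h. unfold is_dir_deriv.
  apply filterlim_ext with (f := fun t => opp (diff_quot g z d t)).
  { intros t. unfold diff_quot. vext. }
  eapply filterlim_comp; [exact h| apply filterlim_opp].
Qed.

Lemma is_dir_deriv_minus (g1 g2 : C -> V) z d (v1 v2 : V) :
  is_dir_deriv g1 z d v1 -> is_dir_deriv g2 z d v2 ->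
  is_dir_deriv (fun w => minus (g1 w) (g2 w)) z d (minus v1 v2).
Proof. intros h1 h2. apply is_dir_deriv_plus; [exact h1| apply is_dir_deriv_opp; exact h2]. Qed.

Lemma is_dir_deriv_continuous (g : C -> V) z d (v : V) : is_dir_deriv g z d v ->
  filterlim (fun t => g (z + RtoC t * d)%C) (locally' 0) (locally (g z)).
Proof.
  intros h.
  apply filterlim_ext_loc with (f := fun t => plus (g z) (scal (RtoC t) (diff_quot g z d t))).
  { exists (mkposreal 1 Rlt_0_1). intros t _ ht. unfold diff_quot. vext.
    rewrite Cmult_assoc, <- RtoC_mult, Rinv_r by exact ht. ring. }
  assert (L := filterlim_comp_2 _ _ _ (filterlim_const (g z))
          (filterlim_comp_2 _ _ _ filterlim_RtoC_0 h (filterlim_scal _ _)) (filterlim_plus _ _)).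
  match type of L with filterlim _ _ (locally ?X) =>
    replace X with (g z) in L by vext end.
  exact L.
Qed.

Lemma is_dir_deriv_scal (a : C -> C) (g : C -> V) z d (al : C) (v : V) :
  @is_dir_deriv C_NormedModule a z d al -> is_dir_deriv g z d v ->
  is_dir_deriv (fun w => scal (a w) (g w)) z d (plus (scal al (g z)) (scal (a z) v)).
Proof.
  intros ha hg. unfold is_dir_deriv.
  apply filterlim_ext with (f := fun t =>
    plus (scal (@diff_quot C_NormedModule a z d t) (g (z + RtoC t * d)%C))
         (scal (a z) (diff_quot g z d t))).
  { intros t. unfold diff_quot. vext. C_ops. ring. }
  apply (filterlim_comp_2 _ _ _
    (filterlim_comp_2 _ _ _ (filterlim_C_AbsRing _ _ ha) (is_dir_deriv_continuous g z d v hg)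
       (filterlim_scal _ _))
    (filterlim_comp_2 _ _ _ (filterlim_const (U := AbsRing_UniformSpace C_AbsRing) (a z)) hg
       (filterlim_scal _ _))
    (filterlim_plus _ _)).
Qed.

Lemma is_dir_deriv_ip (A B : C -> V) z d (vA vB : V) :
  is_dir_deriv A z d vA -> is_dir_deriv B z d vB ->
  @is_dir_deriv C_NormedModule (fun w => ip (A w) (B w)) z d (ip vA (B z) + ip (A z) vB)%C.
Proof.
  intros hA hB. unfold is_dir_deriv.
  apply filterlim_ext with (f := fun t =>
    (ip (diff_quot A z d t) (B (z + RtoC t * d)%C) + ip (A z) (diff_quot B z d t))%C).
  { intros t. unfold diff_quot. ip_simpl_l ip Hip. ip_simpl_r ip Hip.
    rewrite Cconj_RtoC. C_ops. ring. }
  apply (filterlim_comp_2 (G := @locally C_NormedModule (ip vA (B z)))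
    (H := @locally C_NormedModule (ip (A z) vB)) _ _ _
    (filterlim_ip ip Hip _ _ _ _ hA (is_dir_deriv_continuous B z d vB hB))
    (filterlim_ip ip Hip _ _ _ _ (filterlim_const (A z)) hB)
    (filterlim_plus (V := C_NormedModule) _ _)).
Qed.

Lemma is_dir_deriv_of_is_derive (g : C -> V) (z d : C) (l : V) :
  d <> RtoC 0 -> is_derive g z l -> is_dir_deriv g z d (scal d l).
Proof.
  intros hd [_ Hd]. specialize (Hd z (fun P hP => hP)).
  unfold is_dir_deriv.
  apply (filterlim_locally_ball_norm (U := V)). intros eps.
  set (md := Cmod d). assert (hmd : 0 < md) by (apply Cmod_gt_0; auto).
  assert (he' : 0 < eps / (2 * md)) by (apply Rdiv_lt_0_compat; [apply cond_pos | lra]).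
  destruct (Hd (mkposreal _ he')) as [del Hdel].
  assert (hdel' : 0 < del / md) by (apply Rdiv_lt_0_compat; [apply cond_pos | lra]).
  exists (mkposreal _ hdel'). intros t ht t0. simpl in ht.
  change (Rabs (t - 0) < del / md) in ht. rewrite Rminus_0_r in ht.
  set (y := (z + RtoC t * d)%C).
  assert (hyz : Cmod (y - z)%C = Rabs t * md).
  { unfold y. replace (z + RtoC t * d - z)%C with (RtoC t * d)%C by ring.
    rewrite Cmod_mult, Cmod_R. reflexivity. }
  specialize (Hdel y). match type of Hdel with ?P -> _ => assert (hy : P) end.
  { change (Cmod (y - z)%C < del). rewrite hyz.
    apply Rmult_lt_compat_r with (r := md) in ht; [|lra].
    replace (del / md * md) with (pos del) in ht by (field; lra). lra. }
  specialize (Hdel hy). simpl in Hdel.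
  match type of Hdel with _ <= _ * ?X => change X with (Cmod (y - z)%C) in Hdel end.
  rewrite hyz in Hdel.
  unfold ball_norm.
  match goal with |- norm ?X < _ =>
    replace X with (scal (RtoC (/ t)) (minus (minus (g y) (g z)) (scal (minus y z) l))) end.
  2:{ fold y. vext. C_ops. unfold y. rewrite RtoC_inv by exact t0.
      field. exact (RtoC_neq_0 t t0). }
  eapply Rle_lt_trans. apply (norm_scal (K := C_AbsRing) (V := V)).
  change (abs (RtoC (/ t))) with (Cmod (RtoC (/ t))). rewrite Cmod_R.
  assert (ht' : 0 < Rabs t) by (apply Rabs_pos_lt; exact t0).
  rewrite Rabs_inv.
  apply Rle_lt_trans with (/ Rabs t * (eps / (2 * md) * (Rabs t * md))).
  { apply Rmult_le_compat_l; [left; apply Rinv_0_lt_compat; lra| exact Hdel]. }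
  replace (/ Rabs t * (eps / (2 * md) * (Rabs t * md))) with (eps / 2) by (field; lra).
  pose proof (cond_pos eps). lra.
Qed.

End DirectionalDerivative.

Lemma ball_C (x : C) d (t : C) :
  @ball C_UniformSpace x d t <-> ball (fst x) d (fst t) /\ ball (snd x) d (snd t).
Proof. destruct x, t. reflexivity. Qed.

Lemma is_dir_deriv_RtoC (s : C -> R) z d (v : C) :
  @is_dir_deriv C_NormedModule (fun w => RtoC (s w)) z d v <->
  snd v = 0 /\
  filterlim (fun t => / t * (s (z + RtoC t * d)%C - s z)) (locally' 0) (locally (fst v)).
Proof.
  unfold is_dir_deriv.
  assert (Eq : forall t, @diff_quot C_NormedModule (fun w => RtoC (s w)) z d t
                         = RtoC (/ t * (s (z + RtoC t * d)%C - s z))).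
  { intros t. unfold diff_quot. C_ops. C_components. }
  split.
  - intros h. apply (filterlim_ext _ _ Eq) in h. rewrite filterlim_locally in h.
    split.
    + destruct (Req_dec (snd v) 0) as [|hn]; [assumption|]. exfalso.
      assert (hp : 0 < Rabs (snd v)) by (apply Rabs_pos_lt; auto).
      destruct (@filter_ex _ _ locally'_0_proper _ (h (mkposreal _ hp))) as [t ht].
      apply ball_C in ht. destruct ht as [_ ht]. change (Rabs (0 - snd v) < Rabs (snd v)) in ht.
      rewrite Rminus_0_l, Rabs_Ropp in ht. lra.
    + apply filterlim_locally. intros eps. eapply filter_imp; [|exact (h eps)].
      intros t ht. apply ball_C in ht. apply ht.
  - intros [hv h]. eapply filterlim_ext; [intros t; symmetry; apply Eq|].
    apply filterlim_locally. intros eps. rewrite filterlim_locally in h.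
    eapply filter_imp; [|exact (h eps)]. intros t ht.
    apply ball_C. split; [exact ht|]. destruct v as [v1 v2]. simpl in hv |- *. subst v2.
    apply ball_center.
Qed.

Lemma is_derive_0_iff (f : R -> R) l :
  is_derive f 0 l <-> filterlim (fun t => / t * (f t - f 0)) (locally' 0) (locally l).
Proof.
  rewrite is_derive_Reals. split.
  - intros h. apply filterlim_locally. intros eps.
    destruct (h eps (cond_pos eps)) as [del hd]. exists del. intros t ht t0.
    change (Rabs (t - 0) < del) in ht. rewrite Rminus_0_r in ht.
    specialize (hd t t0 ht). rewrite Rplus_0_l in hd.
    change (Rabs (/ t * (f t - f 0) - l) < eps).
    replace (/ t * (f t - f 0)) with ((f t - f 0) / t) by (field; auto). exact hd.
  - intros h eps heps. rewrite filterlim_locally in h.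
    destruct (h (mkposreal _ heps)) as [del hd]. exists del. intros t t0 ht.
    rewrite Rplus_0_l. specialize (hd t). change (Rabs (t - 0) < del -> t <> 0 ->
      Rabs (/ t * (f t - f 0) - l) < eps) in hd. rewrite Rminus_0_r in hd.
    specialize (hd ht t0).
    replace ((f t - f 0) / t) with (/ t * (f t - f 0)) by (field; auto). exact hd.
Qed.

(* Chain rule along a difference quotient: the inner function is patched at [t = 0]
   so that the Reals chain rule [is_derive_comp] applies. *)
Lemma filterlim_diff_quot_comp (sg : R -> R) s0 (phi : R -> R) dphi l :
  filterlim (fun t => / t * (sg t - s0)) (locally' 0) (locally l) -> is_derive phi s0 dphi ->
  filterlim (fun t => / t * (phi (sg t) - phi s0)) (locally' 0) (locally (dphi * l)).
Proof.
  intros h hp.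
  set (sg' := fun t => if Req_EM_T t 0 then s0 else sg t).
  assert (E0 : sg' 0 = s0) by (unfold sg'; destruct Req_EM_T; [reflexivity|lra]).
  assert (Eloc : forall g : R -> R, filterlim (fun t => / t * (g (sg' t) - g s0))
     (locally' 0) (locally (dphi * l)) ->
     filterlim (fun t => / t * (g (sg t) - g s0)) (locally' 0) (locally (dphi * l))).
  { intros g. apply filterlim_ext_loc. exists (mkposreal 1 Rlt_0_1). intros t _ t0.
    unfold sg'. destruct Req_EM_T; [contradiction|reflexivity]. }
  assert (h1 : is_derive sg' 0 l).
  { apply is_derive_0_iff. rewrite E0. eapply filterlim_ext_loc; [|exact h].
    exists (mkposreal 1 Rlt_0_1). intros t _ t0.
    unfold sg'. destruct Req_EM_T; [contradiction|reflexivity]. }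
  rewrite <- E0 in hp.
  pose proof (proj1 (is_derive_0_iff _ _) (is_derive_comp phi sg' 0 dphi l hp h1)) as hc.
  apply Eloc. cbv beta in hc. rewrite E0 in hc.
  replace (dphi * l) with (scal l dphi) by (unfold scal; simpl; unfold mult; simpl; ring).
  exact hc.
Qed.

Lemma is_dir_deriv_comp_R (s : C -> R) (phi : R -> R) z d (v : C) dphi :
  @is_dir_deriv C_NormedModule (fun w => RtoC (s w)) z d v -> is_derive phi (s z) dphi ->
  @is_dir_deriv C_NormedModule (fun w => RtoC (phi (s w))) z d (RtoC dphi * v)%C.
Proof.
  intros h hp. apply is_dir_deriv_RtoC in h as [hv hl].
  apply is_dir_deriv_RtoC. destruct v as [v1 v2]. simpl in hv |- *. subst v2. split; [ring|].
  replace (dphi * v1 - 0 * 0) with (dphi * v1) by ring.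
  exact (filterlim_diff_quot_comp _ _ phi dphi _ hl hp).
Qed.

Lemma is_dir_deriv_Cconj (a : C -> C) z d (al : C) :
  @is_dir_deriv C_NormedModule a z d al ->
  @is_dir_deriv C_NormedModule (fun w => Cconj (a w)) z d (Cconj al).
Proof.
  intros h. unfold is_dir_deriv in *.
  apply filterlim_ext with (f := fun t => Cconj (@diff_quot C_NormedModule a z d t)).
  { intros t. unfold diff_quot. C_ops. C_components. }
  pose proof (proj1 (filterlim_locally _ _) h) as h'. apply filterlim_locally. intros eps.
  eapply filter_imp; [|exact (h' eps)]. intros t ht.
  apply ball_C in ht. apply ball_C. destruct ht as [h1 h2]. split; [exact h1|].
  change (Rabs (- snd (diff_quot a z d t) - - snd al) < eps).
  rewrite <- Rabs_Ropp. replace (- (- snd (diff_quot a z d t) - - snd al))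
    with (snd (diff_quot a z d t) - snd al) by ring. exact h2.
Qed.

(* [g] has Wirtinger derivatives [∂g = w] and [∂̄g = wb] at [z], expressed through the
   partial derivatives [∂_x g = w + wb] and [∂_y g = i (w - wb)]. *)
Definition has_wirt {V : NormedModule C_AbsRing} (g : C -> V) z (w wb : V) :=
  is_dir_deriv g z (RtoC 1) (plus w wb) /\ is_dir_deriv g z Ci (scal Ci (minus w wb)).

Lemma has_wirt_ext {V : NormedModule C_AbsRing} (f g : C -> V) z w wb w' wb' :
  (forall x, f x = g x) -> w = w' -> wb = wb' -> has_wirt f z w wb -> has_wirt g z w' wb'.
Proof.
  intros h <- <-. replace g with f by (apply functional_extensionality; exact h). auto.
Qed.

Section Wirtinger.
Context {V : NormedModule C_AbsRing} (ip : V -> V -> C) (Hip : is_inner_product ip).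
Local Ltac vext := vec_eq ip Hip.

Lemma has_wirt_unique (g : C -> V) z w wb w' wb' :
  has_wirt g z w wb -> has_wirt g z w' wb' -> w = w' /\ wb = wb'.
Proof.
  intros [h1 h2] [h1' h2'].
  pose proof (is_dir_deriv_unique g z _ _ _ h1 h1') as E1.
  pose proof (is_dir_deriv_unique g z _ _ _ h2 h2') as E2.
  split; apply (ip_ext ip Hip); intro e;
  apply (f_equal (ip e)) in E1; apply (f_equal (ip e)) in E2; revert E1 E2; ip_simpl_r ip Hip;
  generalize (ip e w) (ip e wb) (ip e w') (ip e wb'); intros [] [] [] [] E1 E2;
  apply (f_equal fst) in E1 as F1; apply (f_equal snd) in E1 as F2;
  apply (f_equal fst) in E2 as F3; apply (f_equal snd) in E2 as F4;
  simpl in *; apply injective_projections; simpl; lra.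
Qed.

Lemma is_wirt_of_has_wirt (g : C -> V) z w wb :
  has_wirt g z w wb -> is_wirt g z w /\ is_wirt_bar g z wb.
Proof.
  intros [h1 h2]. split; exists (plus w wb), (scal Ci (minus w wb));
    (split; [exact h1|split; [exact h2|]]); vext; C_field.
Qed.

Lemma wirt_of_has_wirt (g : C -> V) z w wb : has_wirt g z w wb -> wirt g z = w.
Proof.
  intros h. apply choose_or_unique; [apply (is_wirt_of_has_wirt _ _ _ _ h)|].
  intros v [vx [vy [h1 [h2 ->]]]]. destruct h as [k1 k2].
  rewrite (is_dir_deriv_unique g z _ _ _ h1 k1), (is_dir_deriv_unique g z _ _ _ h2 k2).
  vext. C_field.
Qed.

Lemma has_wirt_const (c : V) z : has_wirt (fun _ => c) z zero zero.
Proof.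
  split; (eapply eq_ind; [apply (is_dir_deriv_const ip Hip)|]); vext.
Qed.

Lemma has_wirt_plus (g1 g2 : C -> V) z w1 wb1 w2 wb2 :
  has_wirt g1 z w1 wb1 -> has_wirt g2 z w2 wb2 ->
  has_wirt (fun x => plus (g1 x) (g2 x)) z (plus w1 w2) (plus wb1 wb2).
Proof.
  intros [a1 a2] [b1 b2]. split; eapply eq_ind;
    [exact (is_dir_deriv_plus ip Hip _ _ _ _ _ _ a1 b1)| |
     exact (is_dir_deriv_plus ip Hip _ _ _ _ _ _ a2 b2)|]; vext.
Qed.

Lemma has_wirt_minus (g1 g2 : C -> V) z w1 wb1 w2 wb2 :
  has_wirt g1 z w1 wb1 -> has_wirt g2 z w2 wb2 ->
  has_wirt (fun x => minus (g1 x) (g2 x)) z (minus w1 w2) (minus wb1 wb2).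
Proof.
  intros [a1 a2] [b1 b2]. split; eapply eq_ind;
    [exact (is_dir_deriv_minus ip Hip _ _ _ _ _ _ a1 b1)| |
     exact (is_dir_deriv_minus ip Hip _ _ _ _ _ _ a2 b2)|]; vext.
Qed.

Lemma has_wirt_scal (a : C -> C) (g : C -> V) z al alb w wb :
  @has_wirt C_NormedModule a z al alb -> has_wirt g z w wb ->
  has_wirt (fun x => scal (a x) (g x)) z
    (plus (scal al (g z)) (scal (a z) w)) (plus (scal alb (g z)) (scal (a z) wb)).
Proof.
  intros [a1 a2] [b1 b2]. split; eapply eq_ind;
    [exact (is_dir_deriv_scal ip Hip _ _ _ _ _ _ a1 b1)| |
     exact (is_dir_deriv_scal ip Hip _ _ _ _ _ _ a2 b2)|]; vext; C_ops; ring.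
Qed.

Lemma has_wirt_ip (A B : C -> V) z wA wbA wB wbB :
  has_wirt A z wA wbA -> has_wirt B z wB wbB ->
  @has_wirt C_NormedModule (fun x => ip (A x) (B x)) z
    (ip wbA (B z) + ip (A z) wB)%C (ip wA (B z) + ip (A z) wbB)%C.
Proof.
  intros [a1 a2] [b1 b2]. split.
  - eapply eq_ind; [exact (is_dir_deriv_ip ip Hip _ _ _ _ _ _ a1 b1)|].
    ip_simpl_l ip Hip. ip_simpl_r ip Hip. C_ops. ring.
  - eapply eq_ind; [exact (is_dir_deriv_ip ip Hip _ _ _ _ _ _ a2 b2)|].
    ip_simpl_l ip Hip. ip_simpl_r ip Hip. C_ops. rewrite Cconj_Ci. ring.
Qed.

Lemma has_wirt_of_is_derive (g : C -> V) z l : is_derive g z l -> has_wirt g z l zero.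
Proof.
  intros h. split; eapply eq_ind.
  - apply (is_dir_deriv_of_is_derive ip Hip); [apply RtoC_neq_0, R1_neq_R0| exact h].
  - vext.
  - apply (is_dir_deriv_of_is_derive ip Hip); [|exact h].
    intro E. apply (f_equal snd) in E. simpl in E. lra.
  - vext.
Qed.

End Wirtinger.

Lemma has_wirt_Cconj (a : C -> C) z al alb : @has_wirt C_NormedModule a z al alb ->
  @has_wirt C_NormedModule (fun x => Cconj (a x)) z (Cconj alb) (Cconj al).
Proof.
  intros [a1 a2]. split; eapply eq_ind;
    [exact (is_dir_deriv_Cconj _ _ _ _ a1)| | exact (is_dir_deriv_Cconj _ _ _ _ a2)|];
    C_ops; C_field.
Qed.

Lemma has_wirt_comp_R (s : C -> R) (phi : R -> R) z al alb dphi :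
  @has_wirt C_NormedModule (fun x => RtoC (s x)) z al alb -> is_derive phi (s z) dphi ->
  @has_wirt C_NormedModule (fun x => RtoC (phi (s x))) z (RtoC dphi * al)%C (RtoC dphi * alb)%C.
Proof.
  intros [a1 a2] hp. split; eapply eq_ind;
    [exact (is_dir_deriv_comp_R _ _ _ _ _ _ a1 hp)| |
     exact (is_dir_deriv_comp_R _ _ _ _ _ _ a2 hp)|];
    C_ops; ring.
Qed.

Lemma has_wirt_mult (a b : C -> C) z al alb be beb :
  @has_wirt C_NormedModule a z al alb -> @has_wirt C_NormedModule b z be beb ->
  @has_wirt C_NormedModule (fun x => a x * b x)%C z
    (al * b z + a z * be)%C (alb * b z + a z * beb)%C.
Proof. exact (has_wirt_scal ipC ipC_inner_product a b z al alb be beb). Qed.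

Lemma has_wirt_Cminus (a b : C -> C) z al alb be beb :
  @has_wirt C_NormedModule a z al alb -> @has_wirt C_NormedModule b z be beb ->
  @has_wirt C_NormedModule (fun x => a x - b x)%C z (al - be)%C (alb - beb)%C.
Proof. exact (has_wirt_minus ipC ipC_inner_product a b z al alb be beb). Qed.

Lemma lsum_C_zero (F : nat -> C) n :
  (forall k, (k < n)%nat -> F k = RtoC 0) -> @lsum C_NormedModule F n = RtoC 0.
Proof.
  induction n; intros h; simpl; auto.
  rewrite IHn, h by (intros; try apply h; lia). C_ops. ring.
Qed.

Lemma lsum_C_single (F : nat -> C) n j : (j < n)%nat ->
  (forall k, (k < n)%nat -> k <> j -> F k = RtoC 0) -> @lsum C_NormedModule F n = F j.
Proof.
  induction n; intros hj h; [lia|]. simpl. destruct (Nat.eq_dec j n) as [->|hne].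
  - rewrite lsum_C_zero by (intros k hk; apply h; lia). C_ops. ring.
  - rewrite IHn, (h n) by (try lia; intros; apply h; lia). C_ops. ring.
Qed.

Section Span.
Context {V : NormedModule C_AbsRing} (ip : V -> V -> C) (Hip : is_inner_product ip).
Local Ltac vext := vec_eq ip Hip.

Lemma lsum_ext (F G : nat -> V) n :
  (forall k, (k < n)%nat -> F k = G k) -> lsum F n = lsum G n.
Proof. induction n; intros h; simpl; auto. rewrite IHn, h by (intros; try apply h; lia). auto. Qed.

Lemma lsum_zero (F : nat -> V) n : (forall k, (k < n)%nat -> F k = zero) -> lsum F n = zero.
Proof. induction n; intros h; simpl; auto. rewrite IHn, h by (intros; try apply h; lia). vext. Qed.

Lemma ip_lsum_r e (F : nat -> V) n :
  ip e (lsum F n) = @lsum C_NormedModule (fun k => ip e (F k)) n.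
Proof. induction n; simpl; ip_simpl_r ip Hip; [reflexivity|]. rewrite IHn. reflexivity. Qed.

Lemma ip_lsum_l e (F : nat -> V) n :
  ip (lsum F n) e = @lsum C_NormedModule (fun k => ip (F k) e) n.
Proof. induction n; simpl; ip_simpl_l ip Hip; [reflexivity|]. rewrite IHn. reflexivity. Qed.

Lemma in_span_zero (vs : nat -> V) n : in_span vs n zero.
Proof. exists (fun _ => RtoC 0). symmetry. apply lsum_zero. intros k _. vext. Qed.

Lemma in_span_plus (vs : nat -> V) n a b :
  in_span vs n a -> in_span vs n b -> in_span vs n (plus a b).
Proof.
  intros [x ->] [y ->]. exists (fun k => x k + y k)%C. vext.
  rewrite !ip_lsum_r. induction n; simpl; C_ops; [ring|].
  rewrite <- IHn. ip_simpl_r ip Hip. ring.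
Qed.

Lemma in_span_scal (vs : nat -> V) n (c : C) a : in_span vs n a -> in_span vs n (scal c a).
Proof.
  intros [x ->]. exists (fun k => c * x k)%C. vext.
  rewrite !ip_lsum_r. induction n; simpl; C_ops; [ring|].
  rewrite <- IHn. ip_simpl_r ip Hip. ring.
Qed.

Lemma in_span_minus (vs : nat -> V) n a b :
  in_span vs n a -> in_span vs n b -> in_span vs n (minus a b).
Proof.
  intros ha hb. replace (minus a b) with (plus a (scal (RtoC (-1)) b)) by (vext; C_field).
  apply in_span_plus, in_span_scal; assumption.
Qed.

Lemma in_span_le (vs : nat -> V) n m a : (n <= m)%nat -> in_span vs n a -> in_span vs m a.
Proof.
  intros hle [x ->]. exists (fun k => if Nat.ltb k n then x k else RtoC 0).
  induction hle; simpl.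
  - apply lsum_ext. intros k hk. destruct (Nat.ltb_spec k n); [reflexivity|lia].
  - rewrite IHhle. destruct (Nat.ltb_spec m n); [lia|]. vext.
Qed.

Lemma in_span_elem (vs : nat -> V) n k : (k < n)%nat -> in_span vs n (vs k).
Proof.
  intros hk. apply in_span_le with (S k); [lia|].
  exists (fun j => if Nat.eqb j k then RtoC 1 else RtoC 0). simpl. rewrite Nat.eqb_refl.
  rewrite lsum_zero; [vext|].
  intros j hj. destruct (Nat.eqb_spec j k); [lia|]. vext.
Qed.

Lemma in_span_lsum (vs : nat -> V) n (F : nat -> V) m :
  (forall k, (k < m)%nat -> in_span vs n (F k)) -> in_span vs n (lsum F m).
Proof.
  induction m; intros h; simpl; [apply in_span_zero|].
  apply in_span_plus; [apply IHm; intros|apply h]; auto.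
Qed.

Lemma ip_in_span_orth_l (vs : nat -> V) n w x :
  in_span vs n w -> (forall k, (k < n)%nat -> ip (vs k) x = RtoC 0) -> ip w x = RtoC 0.
Proof.
  intros [a ->] h. rewrite ip_lsum_l. apply lsum_C_zero. intros k hk.
  ip_simpl_l ip Hip. rewrite h by auto. C_ops. ring.
Qed.

Lemma ip_in_span_orth_r (vs : nat -> V) n w x :
  in_span vs n w -> (forall k, (k < n)%nat -> ip x (vs k) = RtoC 0) -> ip x w = RtoC 0.
Proof.
  intros hw h. rewrite (ip_conj ip Hip), (ip_in_span_orth_l vs n); auto.
  - C_components; lra.
  - intros k hk. rewrite (ip_conj ip Hip), h by auto. C_components; lra.
Qed.

Lemma in_span_orth_eq_zero (vs : nat -> V) n w :
  in_span vs n w -> (forall k, (k < n)%nat -> ip (vs k) w = RtoC 0) -> w = zero.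
Proof. intros hw h. apply (ip_self_eq_0 ip Hip). apply (ip_in_span_orth_l vs n); auto. Qed.

Lemma not_lin_indep_of_in_span (vs : nat -> V) n : in_span vs n (vs n) -> ~ lin_indep vs (S n).
Proof.
  intros [a ha] hi.
  specialize (hi (fun k => if Nat.eqb k n then RtoC (-1) else a k)).
  enough (E : lsum (fun k => scal (if Nat.eqb k n then RtoC (-1) else a k) (vs k)) (S n) = zero).
  { specialize (hi E n (Nat.lt_succ_diag_r n)). cbv beta in hi. rewrite Nat.eqb_refl in hi.
    apply (f_equal fst) in hi. simpl in hi. lra. }
  simpl. rewrite Nat.eqb_refl.
  rewrite (lsum_ext _ (fun k => scal (a k) (vs k))), <- ha; [vext; C_field|].
  intros k hk. destruct (Nat.eqb_spec k n); [lia|reflexivity].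
Qed.

End Span.

Section GramSchmidt.
Context {H : NormedModule C_AbsRing} (ip : H -> H -> C) (Hip : is_inner_product ip)
  (f : C -> H) (Hindep : forall z n, lin_indep (fun k => dn f k z) (S n)).
Local Ltac vext := vec_eq ip Hip.
Local Ltac ipn := ip_simpl_r ip Hip.
Local Ltac ipnl := ip_simpl_l ip Hip.

Lemma dn_neq_0 k z : dn f k z <> zero.
Proof.
  intros h0. apply (not_lin_indep_of_in_span ip Hip (fun j => dn f j z) k); [| apply Hindep].
  cbv beta. rewrite h0. apply (in_span_zero ip Hip).
Qed.

(* [cderiv] is [zero] where no derivative exists, so [dn f (S k) z <> zero] already
   forces [dn f k] to be differentiable at [z]. *)
Lemma dn_is_derive k z : is_derive (dn f k) z (dn f (S k) z).
Proof.
  pose proof (dn_neq_0 (S k) z) as hnz. simpl in hnz |- *. unfold cderiv, choose_or in *.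
  destruct excluded_middle_informative as [h|h]; [apply proj2_sig|contradiction].
Qed.

Lemma has_wirt_dn k z : has_wirt (dn f k) z (dn f (S k) z) zero.
Proof. exact (has_wirt_of_is_derive ip Hip _ _ _ (dn_is_derive k z)). Qed.

Definition proj_coef (q : nat -> C -> H) n j z : C :=
  (ip (q j z) (dn f n z) / ip (q j z) (q j z))%C.

(* The table [gram_schmidt n] holds [q_0, …, q_n] (at indices [k <= n]); it is rebuilt
   level by level so that the recursion is structural. *)
Fixpoint gram_schmidt (n : nat) : nat -> C -> H :=
  match n with
  | O => fun _ z => dn f 0 z
  | S m => fun k z => if Nat.leb k m then gram_schmidt m k z
      else minus (dn f (S m) z)
             (lsum (fun j => scal (proj_coef (gram_schmidt m) (S m) j z) (gram_schmidt m j z))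
                (S m))
  end.

Definition gs n z := gram_schmidt n n z.
Definition gs_coef n j z := proj_coef gs n j z.
Definition gs_sqnorm n z := norm (gs n z) ^ 2.

Lemma gram_schmidt_stable m k z : (k <= m)%nat -> gram_schmidt m k z = gs k z.
Proof.
  revert k. induction m; intros k hk.
  - replace k with 0%nat by lia. reflexivity.
  - destruct (Nat.eq_dec k (S m)) as [->|hne]; [reflexivity|].
    simpl. replace (Nat.leb k m) with true by (symmetry; apply Nat.leb_le; lia). apply IHm; lia.
Qed.

Lemma gs_rec n z : gs n z = minus (dn f n z) (lsum (fun j => scal (gs_coef n j z) (gs j z)) n).
Proof.
  destruct n; [unfold gs; simpl; vext|].
  unfold gs at 1. cbn [gram_schmidt].
  replace (Nat.leb (S n) n) with false by (symmetry; apply Nat.leb_gt; lia).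
  f_equal. apply lsum_ext. intros j hj.
  unfold gs_coef, proj_coef. rewrite !gram_schmidt_stable by lia. reflexivity.
Qed.

Lemma dn_sub_gs_in_span_gs n z : in_span (fun k => gs k z) n (minus (dn f n z) (gs n z)).
Proof.
  replace (minus (dn f n z) (gs n z)) with (lsum (fun j => scal (gs_coef n j z) (gs j z)) n)
    by (rewrite (gs_rec n z); vext).
  apply (in_span_lsum ip Hip). intros j hj.
  apply (in_span_scal ip Hip), (in_span_elem ip Hip (fun k => gs k z)), hj.
Qed.

Lemma dn_sub_gs_in_span_dn n z : in_span (fun k => dn f k z) n (minus (dn f n z) (gs n z)).
Proof.
  induction n as [n IH] using lt_wf_ind.
  replace (minus (dn f n z) (gs n z)) with (lsum (fun j => scal (gs_coef n j z) (gs j z)) n)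
    by (rewrite (gs_rec n z); vext).
  apply (in_span_lsum ip Hip). intros j hj. apply (in_span_scal ip Hip).
  replace (gs j z) with (minus (dn f j z) (minus (dn f j z) (gs j z))) by vext.
  apply (in_span_minus ip Hip); [apply (in_span_elem ip Hip (fun k => dn f k z)), hj|].
  apply (in_span_le ip Hip) with j; [lia|]. apply IH, hj.
Qed.

Lemma gs_neq_0 n z : gs n z <> zero.
Proof.
  intros h0. apply (not_lin_indep_of_in_span ip Hip (fun j => dn f j z) n); [| apply Hindep].
  pose proof (dn_sub_gs_in_span_dn n z) as h. rewrite h0 in h. cbv beta.
  replace (dn f n z) with (minus (dn f n z) zero) by vext. exact h.
Qed.

Lemma gs_norm_pos n z : 0 < norm (gs n z).
Proof.
  destruct (norm_ge_0 (gs n z)) as [h|h]; [exact h|].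
  exfalso. apply (gs_neq_0 n z), norm_eq_zero. auto.
Qed.

Lemma gs_sqnorm_pos n z : 0 < gs_sqnorm n z.
Proof. unfold gs_sqnorm. pose proof (gs_norm_pos n z). nra. Qed.

Lemma ip_gs_self n z : ip (gs n z) (gs n z) = RtoC (gs_sqnorm n z).
Proof. apply (ip_self ip Hip). Qed.

Lemma gs_coef_eq n j z : gs_coef n j z = (ip (gs j z) (dn f n z) * RtoC (/ gs_sqnorm j z))%C.
Proof.
  unfold gs_coef, proj_coef. rewrite ip_gs_self. unfold Cdiv. f_equal.
  pose proof (gs_sqnorm_pos j z). rewrite RtoC_inv by lra. reflexivity.
Qed.

Lemma gs_orth n z j : (j < n)%nat -> ip (gs j z) (gs n z) = RtoC 0.
Proof.
  revert j. induction n as [n IH] using lt_wf_ind. intros j hj.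
  rewrite (gs_rec n z). ipn. rewrite (ip_lsum_r ip Hip), (lsum_C_single _ n j hj).
  - ipn. rewrite gs_coef_eq, ip_gs_self. pose proof (gs_sqnorm_pos j z).
    rewrite RtoC_inv by lra. field. apply RtoC_neq_0. lra.
  - intros k hk hkj. ipn. destruct (Nat.lt_total j k) as [hjk|[heq|hkj']]; [| lia |].
    + rewrite (IH k hk j hjk). ring.
    + rewrite (ip_conj ip Hip), (IH j hj k) by lia. C_components; lra.
Qed.

Lemma gs_orth_r n z j : (j < n)%nat -> ip (gs n z) (gs j z) = RtoC 0.
Proof. intros hj. rewrite (ip_conj ip Hip), gs_orth by auto. C_components; lra. Qed.

Lemma dn_in_span_gs k n z : (k < n)%nat -> in_span (fun j => gs j z) n (dn f k z).
Proof.
  intros hk. replace (dn f k z) with (plus (gs k z) (minus (dn f k z) (gs k z))) by vext.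
  apply (in_span_plus ip Hip); [apply (in_span_elem ip Hip (fun j => gs j z)), hk|].
  apply (in_span_le ip Hip) with k; [lia|]. apply dn_sub_gs_in_span_gs.
Qed.

Lemma ip_dn_gs k n z : (k < n)%nat -> ip (dn f k z) (gs n z) = RtoC 0.
Proof.
  intros hk. apply (ip_in_span_orth_l ip Hip (fun j => gs j z) n); [apply dn_in_span_gs, hk|].
  intros j hj. apply gs_orth, hj.
Qed.

Lemma ip_gs_in_span n z w : in_span (fun j => gs j z) n w -> ip (gs n z) w = RtoC 0.
Proof. intros h. apply (ip_in_span_orth_r ip Hip (fun j => gs j z) n); auto. apply gs_orth_r. Qed.

Lemma ip_gs_dn n z : ip (gs n z) (dn f n z) = RtoC (gs_sqnorm n z).
Proof.
  replace (dn f n z) with (plus (gs n z) (minus (dn f n z) (gs n z))) by vext.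
  rewrite (ip_plus_r ip Hip), ip_gs_self, ip_gs_in_span by apply dn_sub_gs_in_span_gs.
  C_ops. ring.
Qed.

Lemma orth_proj_dn n z : orth_proj ip (fun k => dn f k z) n (dn f n z) = minus (dn f n z) (gs n z).
Proof.
  unfold orth_proj. apply choose_or_unique.
  - split; [apply dn_sub_gs_in_span_dn|]. intros k hk.
    replace (minus (dn f n z) (minus (dn f n z) (gs n z))) with (gs n z) by vext.
    apply ip_dn_gs, hk.
  - intros w [hw ho].
    apply minus_zero_eq.
    { apply (in_span_orth_eq_zero ip Hip (fun k => dn f k z) n).
      - apply (in_span_minus ip Hip); [exact hw|apply dn_sub_gs_in_span_dn].
      - intros k hk. specialize (ho k hk). pose proof (ip_dn_gs k n z hk) as h2.
        revert ho h2. cbv beta. ipn. intros ho h2. rewrite h2.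
        transitivity (- (ip (dn f k z) (dn f n z) - ip (dn f k z) w))%C; [ring|].
        rewrite ho. ring. }
Qed.

Lemma un_gs n z : un ip f n z = scal (RtoC (/ norm (gs n z))) (gs n z).
Proof.
  assert (E : qn ip f n z = gs n z) by (unfold qn; rewrite orth_proj_dn; vext).
  unfold un, rn. rewrite E. reflexivity.
Qed.

Definition theta n z := (ip (gs n z) (dn f (S n) z) * RtoC (/ gs_sqnorm n z))%C.
Definition theta_pred n z := match n with O => RtoC 0 | S m => theta m z end.
Definition lambda n z := (theta n z - theta_pred n z)%C.

Definition gs_structure n z := exists wb,
  has_wirt (gs n) z (plus (gs (S n) z) (scal (lambda n z) (gs n z))) wb /\
  in_span (fun k => gs k z) n wb.

Lemma has_wirt_gs_sqnorm n z w wb : has_wirt (gs n) z w wb ->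
  @has_wirt C_NormedModule (fun x => RtoC (gs_sqnorm n x)) z
    (ip wb (gs n z) + ip (gs n z) w)%C (ip w (gs n z) + ip (gs n z) wb)%C.
Proof.
  intros h. eapply has_wirt_ext;
    [| reflexivity | reflexivity | exact (has_wirt_ip ip Hip _ _ _ _ _ _ _ h h)].
  intros x. apply ip_gs_self.
Qed.

Lemma has_wirt_inv_gs_sqnorm n z al alb :
  @has_wirt C_NormedModule (fun x => RtoC (gs_sqnorm n x)) z al alb ->
  @has_wirt C_NormedModule (fun x => RtoC (/ gs_sqnorm n x)) z
    (RtoC (- / gs_sqnorm n z ^ 2) * al)%C (RtoC (- / gs_sqnorm n z ^ 2) * alb)%C.
Proof.
  intros h. apply (has_wirt_comp_R (gs_sqnorm n) Rinv z al alb _ h).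
  pose proof (gs_sqnorm_pos n z). auto_derive; [lra|]. field. lra.
Qed.

Lemma has_wirt_gs_coef n j z w wb : has_wirt (gs j) z w wb ->
  exists al alb, @has_wirt C_NormedModule (gs_coef n j) z al alb.
Proof.
  intros h. do 2 eexists.
  eapply has_wirt_ext; [intros x; symmetry; apply gs_coef_eq| reflexivity| reflexivity|].
  exact (has_wirt_mult _ _ _ _ _ _ _ (has_wirt_ip ip Hip _ _ _ _ _ _ _ h (has_wirt_dn n z))
          (has_wirt_inv_gs_sqnorm _ _ _ _ (has_wirt_gs_sqnorm j z w wb h))).
Qed.

(* The partial sums [S_m = Σ_(j<m) c_(n,j) q_j] of the Gram–Schmidt recursion for [q_n]:
   given the structure equations below [n], their [∂̄] stays in [span(q_j, j<n)], their
   [∂] in [span(q_j, j<=n)], and only the last term contributes a [q_n]-component. *)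
Lemma has_wirt_gs_partial_sum n z : (forall m, (m < n)%nat -> gs_structure m z) ->
  forall m, (m <= n)%nat -> exists Sw Sb,
    has_wirt (fun x => lsum (fun j => scal (gs_coef n j x) (gs j x)) m) z Sw Sb /\
    in_span (fun k => gs k z) n Sb /\ in_span (fun k => gs k z) (S n) Sw /\
    ip (gs n z) Sw = (if Nat.eqb m n then theta_pred n z * RtoC (gs_sqnorm n z) else RtoC 0)%C.
Proof.
  intros IH. set (qz := fun k => gs k z).
  induction m as [|m IHm]; intros hm.
  { exists zero, zero. split; [exact (has_wirt_const ip Hip zero z)|].
    split; [apply (in_span_zero ip Hip)|]. split; [apply (in_span_zero ip Hip)|].
    ipn. destruct (Nat.eqb_spec 0 n); [subst; simpl; ring|reflexivity]. }
  destruct (IHm ltac:(lia)) as [Sw [Sb [hW [hb [hw hip]]]]].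
  destruct (IH m ltac:(lia)) as [wbm [hqm hwbm]].
  destruct (has_wirt_gs_coef n m z _ _ hqm) as [al [alb hc]].
  do 2 eexists.
  split;
    [exact (has_wirt_plus ip Hip _ _ _ _ _ _ _ hW (has_wirt_scal ip Hip _ _ _ _ _ _ _ hc hqm))|].
  assert (hm' : (m < S n)%nat) by lia. assert (hSm : (S m < S n)%nat) by lia.
  split; [|split].
  - apply (in_span_plus ip Hip); [exact hb|].
    apply (in_span_plus ip Hip); apply (in_span_scal ip Hip);
      [apply (in_span_elem ip Hip qz); lia | apply (in_span_le ip Hip) with m; [lia|exact hwbm]].
  - apply (in_span_plus ip Hip); [exact hw|].
    apply (in_span_plus ip Hip); apply (in_span_scal ip Hip);
      [apply (in_span_elem ip Hip qz), hm'|].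
    apply (in_span_plus ip Hip);
      [apply (in_span_elem ip Hip qz), hSm|
       apply (in_span_scal ip Hip), (in_span_elem ip Hip qz), hm'].
  - ipn. rewrite hip, (gs_orth_r n z m) by lia.
    destruct (Nat.eqb_spec m n); [lia|].
    destruct (Nat.eqb_spec (S m) n) as [hsn|hsn].
    + subst n. rewrite ip_gs_self, gs_coef_eq. simpl theta_pred. unfold theta. ring.
    + rewrite (gs_orth_r n z (S m)) by lia. ring.
Qed.

(* Differentiate [⟨q_k, q_n⟩ = 0]; the term [⟨∂̄ q_k, q_n⟩] vanishes since
   [∂̄ q_k ∈ span(q_j, j<k)]. *)
Lemma ip_gs_wirt_gs k n z w wb : (k < n)%nat -> gs_structure k z ->
  has_wirt (gs n) z w wb -> ip (gs k z) w = RtoC 0.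
Proof.
  intros hk [wbk [hqk hwbk]] hqn.
  pose proof (has_wirt_ip ip Hip _ _ _ _ _ _ _ hqk hqn) as h1.
  assert (h2 : @has_wirt C_NormedModule (fun x => ip (gs k x) (gs n x)) z (RtoC 0) (RtoC 0)).
  { eapply has_wirt_ext;
      [| reflexivity| reflexivity| exact (has_wirt_const ipC ipC_inner_product (RtoC 0) z)].
    intros x. symmetry. apply gs_orth, hk. }
  destruct (has_wirt_unique ipC ipC_inner_product _ _ _ _ _ _ h1 h2) as [E _].
  rewrite (ip_in_span_orth_l ip Hip (fun j => gs j z) k) in E;
    [| exact hwbk | intros j hj; apply gs_orth; lia].
  rewrite <- E. ring.
Qed.

Lemma eq_gs_succ_of_orth n z w :
  in_span (fun k => gs k z) (S n) (minus (dn f (S n) z) w) ->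
  (forall k, (k < n)%nat -> ip (gs k z) w = RtoC 0) ->
  ip (gs n z) w = (lambda n z * RtoC (gs_sqnorm n z))%C ->
  w = plus (gs (S n) z) (scal (lambda n z) (gs n z)).
Proof.
  intros hspan horth hn. apply minus_zero_eq.
  apply (in_span_orth_eq_zero ip Hip (fun k => gs k z) (S n)).
  - replace (minus w (plus (gs (S n) z) (scal (lambda n z) (gs n z)))) with
      (minus (minus (minus (dn f (S n) z) (gs (S n) z)) (minus (dn f (S n) z) w))
         (scal (lambda n z) (gs n z))) by vext.
    apply (in_span_minus ip Hip); [apply (in_span_minus ip Hip)|];
      [apply dn_sub_gs_in_span_gs| exact hspan|].
    apply (in_span_scal ip Hip), (in_span_elem ip Hip (fun k => gs k z)). lia.
  - intros k hk. cbv beta. ipn. rewrite (gs_orth (S n) z k) by lia.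
    destruct (Nat.eq_dec k n) as [->|hkn].
    + rewrite hn, ip_gs_self. ring.
    + rewrite horth, (gs_orth n z k) by lia. ring.
Qed.

Lemma gs_structure_all n z : gs_structure n z.
Proof.
  revert z. induction n as [n IH] using lt_wf_ind. intros z.
  assert (IHz : forall m, (m < n)%nat -> gs_structure m z) by (intros m hm; apply IH, hm).
  destruct (has_wirt_gs_partial_sum n z IHz n (le_n n)) as [Sw [Sb [hW [hb [hw hip]]]]].
  rewrite Nat.eqb_refl in hip.
  assert (hqn : has_wirt (gs n) z (minus (dn f (S n) z) Sw) (minus zero Sb)).
  { eapply has_wirt_ext; [| reflexivity| reflexivity|
      exact (has_wirt_minus ip Hip _ _ _ _ _ _ _ (has_wirt_dn n z) hW)].
    intros x. symmetry. apply gs_rec. }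
  exists (minus zero Sb). split.
  - rewrite <- (eq_gs_succ_of_orth n z (minus (dn f (S n) z) Sw)); [exact hqn| | |].
    + replace (minus (dn f (S n) z) (minus (dn f (S n) z) Sw)) with Sw by vext. exact hw.
    + intros k hk. exact (ip_gs_wirt_gs k n z _ _ hk (IHz k hk) hqn).
    + ipn. rewrite hip. unfold lambda, theta. pose proof (gs_sqnorm_pos n z).
      rewrite RtoC_inv by lra. field. apply RtoC_neq_0. lra.
  - apply (in_span_minus ip Hip); [apply (in_span_zero ip Hip)| exact hb].
Qed.

Lemma has_wirt_gs_sqnorm_lambda n z :
  @has_wirt C_NormedModule (fun x => RtoC (gs_sqnorm n x)) z
    (lambda n z * RtoC (gs_sqnorm n z))%C (Cconj (lambda n z) * RtoC (gs_sqnorm n z))%C.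
Proof.
  destruct (gs_structure_all n z) as [wb [hW hwb]].
  eapply has_wirt_ext; [intros x; reflexivity| | | exact (has_wirt_gs_sqnorm n z _ _ hW)];
    C_goal.
  - rewrite (ip_in_span_orth_l ip Hip (fun k => gs k z) n wb); [| exact hwb | apply gs_orth].
    ipn. rewrite (gs_orth (S n) z n), ip_gs_self by lia. ring.
  - rewrite (ip_gs_in_span n z wb hwb). ipnl.
    rewrite (gs_orth_r (S n) z n), ip_gs_self by lia. ring.
Qed.

Lemma has_wirt_ln_gs_sqnorm n z :
  @has_wirt C_NormedModule (fun x => RtoC (ln (gs_sqnorm n x))) z (lambda n z) (Cconj (lambda n z)).
Proof.
  pose proof (gs_sqnorm_pos n z) as hs.
  assert (hd : is_derive ln (gs_sqnorm n z) (/ gs_sqnorm n z)) by (auto_derive; [lra| field; lra]).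
  eapply has_wirt_ext; [intros x; reflexivity| | |
    exact (has_wirt_comp_R _ _ _ _ _ _ (has_wirt_gs_sqnorm_lambda n z) hd)];
    C_goal; rewrite RtoC_inv by lra; field; apply RtoC_neq_0; lra.
Qed.

Lemma has_wirt_Cconj_theta n z : exists a,
  @has_wirt C_NormedModule (fun x => Cconj (theta n x)) z
    (RtoC (gs_sqnorm (S n) z / gs_sqnorm n z)) a.
Proof.
  destruct (gs_structure_all n z) as [wb [hW _]].
  pose proof (has_wirt_mult _ _ _ _ _ _ _
    (has_wirt_ip ip Hip _ _ _ _ _ _ _ hW (has_wirt_dn (S n) z))
    (has_wirt_inv_gs_sqnorm _ _ _ _ (has_wirt_gs_sqnorm_lambda n z))) as h.
  eexists. eapply has_wirt_ext;
    [intros x; reflexivity| | reflexivity| exact (has_wirt_Cconj _ _ _ _ h)].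
  rewrite <- Cconj_RtoC. f_equal. ipnl. ipn. rewrite ip_gs_dn.
  pose proof (gs_sqnorm_pos n z) as hs. C_field; lra.
Qed.

Lemma ip_un_wirt_un n z :
  ip (un ip f (S n) z) (wirt (un ip f n) z) = RtoC (norm (gs (S n) z) / norm (gs n z)).
Proof.
  assert (hnorm : forall x, norm (gs n x) = sqrt (gs_sqnorm n x))
    by (intros x; unfold gs_sqnorm; rewrite sqrt_pow2 by apply norm_ge_0; reflexivity).
  assert (hd : ex_derive (fun y => / sqrt y) (gs_sqnorm n z)).
  { pose proof (gs_sqnorm_pos n z). auto_derive.
    split; [lra|split; auto]. apply Rgt_not_eq, sqrt_lt_R0; lra. }
  destruct hd as [dphi hd].
  destruct (gs_structure_all n z) as [wb [hW _]].
  assert (hu := has_wirt_scal ip Hip _ _ _ _ _ _ _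
    (has_wirt_comp_R _ _ _ _ _ _ (has_wirt_gs_sqnorm_lambda n z) hd) hW).
  rewrite un_gs. erewrite (wirt_of_has_wirt ip Hip _ _ _ _);
    [| eapply has_wirt_ext; [| reflexivity| reflexivity| exact hu]];
    [| intros x; cbv beta; rewrite <- hnorm, un_gs; reflexivity].
  cbv beta. ipnl. ipn. rewrite (gs_orth_r (S n) z n), ip_gs_self, <- hnorm by lia.
  rewrite !Cconj_RtoC. unfold gs_sqnorm.
  pose proof (gs_norm_pos n z). pose proof (gs_norm_pos (S n) z). pose proof (gs_sqnorm_pos n z).
  C_field; repeat split; lra.
Qed.

Lemma hN_S n z : hN ip f (S n) z = gs_sqnorm (S n) z / gs_sqnorm n z.
Proof.
  unfold hN. rewrite ip_un_wirt_un, Cmod_R, pow2_abs. unfold gs_sqnorm.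
  pose proof (gs_norm_pos n z). field. lra.
Qed.

Lemma hN_S_pos n z : 0 < hN ip f (S n) z.
Proof. rewrite hN_S. apply Rdiv_lt_0_compat; apply gs_sqnorm_pos. Qed.

Lemma has_wirt_ln_hN n z :
  @has_wirt C_NormedModule (fun x => RtoC (ln (hN ip f (S n) x))) z
    (lambda (S n) z - lambda n z)%C (Cconj (lambda (S n) z) - Cconj (lambda n z))%C.
Proof.
  eapply has_wirt_ext; [| reflexivity | reflexivity |
    exact (has_wirt_Cminus _ _ _ _ _ _ _
             (has_wirt_ln_gs_sqnorm (S n) z) (has_wirt_ln_gs_sqnorm n z))].
  intros x. cbv beta. rewrite hN_S, ln_div, RtoC_minus by apply gs_sqnorm_pos. reflexivity.
Qed.

Lemma has_wirt_Cconj_theta_pred n z : exists a,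
  @has_wirt C_NormedModule (fun x => Cconj (theta_pred n x)) z (RtoC (hN ip f n z)) a.
Proof.
  destruct n as [|n].
  - exists (RtoC 0). eapply has_wirt_ext; [| reflexivity | reflexivity |
      exact (has_wirt_const ipC ipC_inner_product (RtoC 0) z)].
    intros x. simpl. C_components; lra.
  - rewrite hN_S. exact (has_wirt_Cconj_theta n z).
Qed.

(* [Cconj λ_(n+1) - Cconj λ_n] is a conjugated second difference of the [θ]'s, so its
   [∂] is the second difference of the [∂̄ θ = h]. *)
Lemma has_wirt_Cconj_lambda_diff n z : exists a,
  @has_wirt C_NormedModule (fun x => Cconj (lambda (S n) x) - Cconj (lambda n x))%C z
    (RtoC (hN ip f n z - 2 * hN ip f (S n) z + hN ip f (S (S n)) z)) a.
Proof.
  destruct (has_wirt_Cconj_theta (S n) z) as [a1 h1].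
  destruct (has_wirt_Cconj_theta n z) as [a2 h2].
  destruct (has_wirt_Cconj_theta_pred n z) as [a3 h3].
  eexists. eapply has_wirt_ext; [| | reflexivity |
    exact (has_wirt_Cminus _ _ _ _ _ _ _ (has_wirt_Cminus _ _ _ _ _ _ _ h1 h2)
             (has_wirt_Cminus _ _ _ _ _ _ _ h2 h3))].
  - intros x. cbv beta. unfold lambda. simpl theta_pred. rewrite !Cminus_conj. reflexivity.
  - rewrite !hN_S. C_components.
Qed.

End GramSchmidt.

Theorem mainTheorem7
  (H : CompleteNormedModule C_AbsRing) (ip : H -> H -> C)
  (Hip : is_inner_product ip) (Hsep : @separable H)
  (w1 w2 : C) (Hlat : lattice_basis w1 w2)
  (f : C -> H) (Hf : holomorphic f)
  (Hindep : forall (z : C) (n : nat), lin_indep (fun k => dn f k z) (S n))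
  (Hper : forall m n : Z, exists (c : C -> C) (V : H -> H),
      holomorphicC c /\ (forall z, c z <> 0%C) /\ is_unitary ip V /\
      forall z, f (z + lattice_pt w1 w2 m n)%C = scal (c z) (V (f z))) :
  forall N : nat, (1 <= N)%nat ->
    (forall z, 0 < hN ip f N z) /\
    exists k : C -> C,
      (forall z, is_wirt_bar (fun w => RtoC (ln (hN ip f N w))) z (k z)) /\
      (forall z, is_wirt k z
         (RtoC (hN ip f (N - 1) z - 2 * hN ip f N z + hN ip f (N + 1) z))).
Proof.
  intros N hN1. destruct N as [|M]; [lia|].
  split; [exact (hN_S_pos ip Hip f Hindep M)|].
  exists (fun x => Cconj (lambda ip f (S M) x) - Cconj (lambda ip f M x))%C. split; intros z.
  - exact (proj2 (is_wirt_of_has_wirt ipC ipC_inner_product _ _ _ _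
                   (has_wirt_ln_hN ip Hip f Hindep M z))).
  - destruct (has_wirt_Cconj_lambda_diff ip Hip f Hindep M z) as [a h].
    replace (S M - 1)%nat with M by lia. replace (S M + 1)%nat with (S (S M)) by lia.
    exact (proj1 (is_wirt_of_has_wirt ipC ipC_inner_product _ _ _ _ h)).
Qed.
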